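(* Let $(a^*,b^* )$ be the selected pair. If $b^*>0$, then for all $x\ge0$ $$v_{a^*,b^*}(x)=\frac{\delta}{q}\mathbb Z^{(q)}(a^*-x)-\beta\,\tilde r^{(q)}_{b^*-a^*}(b^*-x).$$ In particular, $v_{a^*,b^*}(x)=\frac{\delta}{q}-\beta R^{(q)}(b^*-x)$ for $x\ge a^*$, and $v_{a^*,b^*}(x)=\beta\big(x-b^*-\frac{\psi_X'(0+)}{q}\big)+\frac{\delta}{q}$ for $x\ge b^*$. If $a^*=b^*=0$, then $v_{0,0}(x)=\beta x+\rho$ for $x\ge0$. In both cases, $\lim_{x\downarrow0}v_{a^*,b^*}(x)=v_{a^*,b^*}(0)=\rho$.
   Context: Let $Y$ be a spectrally positive Lévy process (not a subordinator) with Laplace exponent $\psi_Y(\theta)=\log\mathbb E[e^{-\theta Y_1}]$, $\mathbb E[Y_1]=-\psi_Y'(0+)<\infty$. Fix $q>0$, $\delta>0$, $\beta\in(0,1)$, $\rho\in\mathbb R$. Let $X_t=Y_t-\delta t$, with $\psi_X(\theta)=\psi_Y(\theta)+\delta\theta$. Scale functions $\mathbb W^{(q)},W^{(q)}$: they vanish on $(-\infty,0)$, are continuous and strictly increasing on $[0,\infty)$, and have Laplace transforms $1/(\psi_Y(\theta)-q)$ and $1/(\psi_X(\theta)-q)$, respectively, for large $\theta$. Let $\mathbb Z^{(q)}(x)=1+q\int_0^x\mathbb W^{(q)}$, $Z^{(q)}(x)=1+q\int_0^xW^{(q)}$, $\overline Z^{(q)}(x)=\int_0^xZ^{(q)}$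 (equal to $1$, $1$, $x$ for $x\le0$), and $R^{(q)}(z)=\overline Z^{(q)}(z)+\psi_X'(0+)/q$. Set $$r^{(q)}_c(z)=Z^{(q)}(z)+q\delta\int_c^z\mathbb W^{(q)}(z-y)W^{(q)}(y)\,dy,\qquad \tilde r^{(q)}_c(z)=R^{(q)}(z)+\delta\int_c^z\mathbb W^{(q)}(z-y)Z^{(q)}(y)\,dy,$$ and $\Gamma(a,b)=\delta\mathbb Z^{(q)}(a)-q\rho-q\beta\tilde r^{(q)}_{b-a}(b)$. For $0\le a<b$, $v_{a,b}(x)$ is the expected value $\mathbb E_x[\int_0^{\sigma}e^{-qt}\,dA_t+\beta\int_{[0,\sigma]}e^{-qt}\,dS_t+\rho e^{-q\sigma}]$ under the two-layer $(a,b)$ strategy. Under this strategy, dividends are paid at rate $\delta$ while the surplus $U=Y-A-S$ is above $a$ ($A_t=\delta\int_0^t\mathbf 1_{\{U_s>a\}}ds$), and the surplus is reflected at $b$ from above by the lump-sum process $S$; here $\sigma=\inf\{t>0:U_t<0\}$. It satisfies $$v_{a,b}(x)=-\frac{\Gamma(a,b)}{q}\frac{r^{(q)}_{b-a}(b-x)}{r^{(q)}_{b-a}(b)}+\frac{\delta}{q}\mathbb Z^{(q)}(a-x)-\beta\tilde r^{(q)}_{b-a}(b-x).$$ The strategy $\pi_{0,0}$ pays the whole initial surplus $x$ as a lump sum at time $0$ (immediate liquidation and ruin), so that $v_{0,0}(x)=\beta x+\rho$. Selected pair: if $\Gamma(0,0)=\delta-q\rho-\beta\psi_X'(0+)\le0$,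 then $a^*=b^*=0$. Otherwise, $b^*>0$ solves $\min_{0\le a\le b^*}\Gamma(a,b^* )=0$ and $a^*$ is the unique minimizer of $a\mapsto\Gamma(a,b^* )$ on $[0,b^*]$. When $b^*>0$, one has $\Gamma(a^*,b^* )=0$; when in addition $a^*>0$, one has $Z^{(q)}(b^*-a^* )=\beta^{-1}$. *)

From Stdlib Require Import Reals Lra ClassicalEpsilon.
Open Scope R_scope.

(* Riemann integral int_a^b f (signed, Stdlib convention), or 0 if f is not
   Riemann integrable on [a,b]. *)
Definition integ (f : R -> R) (a b : R) : R :=
  epsilon (inhabits 0)
    (fun I => exists pr : Riemann_integrable f a b, RiemannInt pr = I).

Definition improper_int0 (g : R -> R) (L : R) : Prop :=
  forall eps, 0 < eps -> exists M, forall T, M <= T -> Rabs (integ g 0 T - L) < eps.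

Definition laplace_eq (f : R -> R) (theta L : R) : Prop :=
  improper_int0 (fun x => exp (- theta * x) * f x) L.

Definition is_scale_function (psi : R -> R) (q : R) (f : R -> R) : Prop :=
  (forall x, x < 0 -> f x = 0) /\
  (forall x, 0 <= x -> limit1_in f (fun y => 0 <= y) (f x) x) /\
  (forall x y, 0 <= x -> x < y -> f x < f y) /\
  (exists theta0, forall theta, theta0 < theta ->
       q < psi theta /\ laplace_eq f theta (/ (psi theta - q))).

Definition Zq (q : R) (W : R -> R) (x : R) : R :=
  if Rle_dec x 0 then 1 else 1 + q * integ W 0 x.

Definition Zbarq (q : R) (W : R -> R) (x : R) : R :=
  if Rle_dec x 0 then x else integ (Zq q W) 0 x.

(* R^{(q)}(z) = Zbar(z) + psi_X'(0+)/q ; dX stands for psi_X'(0+) *)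
Definition Rq (q dX : R) (W : R -> R) (z : R) : R := Zbarq q W z + dX / q.

Section Fns.
Variables (q delta beta rho dX : R) (WW W : R -> R).

Definition r_c (c z : R) : R :=
  Zq q W z + q * delta * integ (fun y => WW (z - y) * W y) c z.

Definition rt_c (c z : R) : R :=
  Rq q dX W z + delta * integ (fun y => WW (z - y) * Zq q W y) c z.

Definition Gamma (a b : R) : R :=
  delta * Zq q WW a - q * rho - q * beta * rt_c (b - a) b.

Definition v_formula (a b x : R) : R :=
  - (Gamma a b / q) * (r_c (b - a) (b - x) / r_c (b - a) b)
  + (delta / q) * Zq q WW (a - x) - beta * rt_c (b - a) (b - x).

Definition selected_pair (a b : R) : Prop :=
  (Gamma 0 0 <= 0 /\ a = 0 /\ b = 0) \/
  (0 < Gamma 0 0 /\ 0 < b /\ 0 <= a <= b /\ Gamma a b = 0 /\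
   (forall a1, 0 <= a1 <= b -> Gamma a b <= Gamma a1 b) /\
   (forall a1, 0 <= a1 <= b -> Gamma a1 b = Gamma a b -> a1 = a)).
End Fns.

(* Once Gamma astar bstar = 0 the first term of the formula for v_{astar,bstar} drops out.
   For x >= astar the convolution term vanishes and Z(astar - x) = 1 because WW is zero on
   (-oo, 0), and for x >= bstar moreover Zbar(bstar - x) = bstar - x.  Evaluating at 0 and
   using Gamma = 0 once more gives v(0) = rho; right-continuity at 0 comes from the continuity
   of the scale functions and a Lipschitz estimate for the convolution integral.

   The formula is only available when astar < bstar, and astar = bstar > 0 is impossible: the
   left derivative of Gamma(., b) at b is q delta WW(b) (1 - beta) > 0, so b does not minimise
   Gamma(., b).  Here WW(b) > 0 because WW(0) >= 0: otherwise, for large theta, the Laplace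
   transform of WW would be dominated by the negative contribution of a neighbourhood of 0,
   contradicting its value 1 / (psi(theta) - q) > 0. *)

From Stdlib Require Import Reals Lra ClassicalEpsilon.
From Coquelicot Require Import Coquelicot.
Open Scope R_scope.

Lemma integ_RInt (f : R -> R) (a b : R) : ex_RInt f a b -> integ f a b = RInt f a b.
Proof.
  intros Hex. unfold integ.
  destruct (epsilon_spec (inhabits 0)
      (fun I => exists pr : Riemann_integrable f a b, RiemannInt pr = I)) as [pr <-].
  - exists (RiemannInt (ex_RInt_Reals_0 _ _ _ Hex)). eexists; reflexivity.
  - symmetry. apply RInt_Reals.
Qed.

Lemma integ_ext_RInt (f g : R -> R) (a b : R) : ex_RInt g a b ->
  (forall x, Rmin a b < x < Rmax a b -> g x = f x) -> integ f a b = RInt g a b.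
Proof.
  intros Hex Hgf. rewrite integ_RInt.
  - symmetry. exact (RInt_ext g f a b Hgf).
  - exact (ex_RInt_ext g f a b Hgf Hex).
Qed.

Lemma integ_eq_0 (f : R -> R) (a b : R) :
  (forall x, Rmin a b < x < Rmax a b -> f x = 0) -> integ f a b = 0.
Proof.
  intros Hf. rewrite (integ_ext_RInt f (fun _ => 0)).
  - rewrite RInt_const. exact (scal_zero_r (V := R_ModuleSpace) (b - a)).
  - apply ex_RInt_const.
  - intros x Hx. symmetry. auto.
Qed.

Lemma ex_RInt_continuity_pt (g : R -> R) (a b : R) :
  (forall x, continuity_pt g x) -> ex_RInt g a b.
Proof.
  intros Hg. apply (ex_RInt_continuous (V := R_CompleteNormedModule)).
  intros x _. apply continuity_pt_filterlim, Hg.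
Qed.

Lemma continuity_pt_RInt (g : R -> R) (a x : R) :
  (forall y, continuity_pt g y) -> continuity_pt (fun s => RInt g a s) x.
Proof.
  intros Hg. apply continuity_pt_filterlim, (ex_derive_continuous (fun s => RInt g a s)).
  eexists. apply (is_derive_RInt g (fun s => RInt g a s) a x).
  - apply filter_forall. intros s.
    apply (RInt_correct (V := R_CompleteNormedModule)), ex_RInt_continuity_pt, Hg.
  - apply continuity_pt_filterlim, Hg.
Qed.

Lemma continuity_bounded (g : R -> R) (a b : R) : (forall x, continuity_pt g x) ->
  exists M, 0 <= M /\ forall t, a <= t <= b -> Rabs (g t) <= M.
Proof.
  intros Hg. destruct (Rle_or_lt a b) as [Hab|Hba].
  - destruct (continuity_ab_maj (fun t => Rabs (g t)) a b Hab) as [tM [HM _]].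
    + intros t _. apply (continuity_pt_comp g Rabs); [apply Hg|apply Rcontinuity_abs].
    + exists (Rabs (g tM)). split; [apply Rabs_pos|exact HM].
  - exists 0. split; [lra|]. intros t Ht. lra.
Qed.

Lemma RInt_reflect (g : R -> R) (c z : R) : (forall y, continuity_pt g y) ->
  RInt (fun y => g (z - y)) c z = RInt g 0 (z - c).
Proof.
  intros Hg.
  assert (Hlin := RInt_comp_lin g (-1) z c z).
  replace (-1 * c + z) with (z - c) in Hlin by ring.
  replace (-1 * z + z) with 0 in Hlin by ring.
  rewrite <- (opp_RInt_swap g), <- Hlin by (apply ex_RInt_continuity_pt, Hg).
  rewrite <- RInt_opp.
  - apply RInt_ext. intros y _.
    change (g (z - y) = - (-1 * g (-1 * y + z))).
    replace (-1 * y + z) with (z - y) by ring. ring.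
  - apply (ex_RInt_ext (fun y => - g (z - y))).
    + intros y _. change (- g (z - y) = -1 * g (-1 * y + z)).
      replace (-1 * y + z) with (z - y) by ring. ring.
    + apply ex_RInt_continuity_pt. intros y. apply continuity_pt_opp.
      apply (continuity_pt_comp (fun y => z - y) g); [reg|apply Hg].
Qed.

Lemma Rmax0_dist (y z : R) : Rabs (Rmax 0 z - Rmax 0 y) <= Rabs (z - y).
Proof.
  unfold Rmax; destruct (Rle_dec 0 z), (Rle_dec 0 y); unfold Rabs;
    repeat destruct Rcase_abs; lra.
Qed.

(* Scale functions vanish on (-oo, 0) and may jump at 0; [ext0 f] is the
   continuous function that agrees with them on [0, +oo). *)
Definition ext0 (f : R -> R) (y : R) : R := f (Rmax 0 y).

Lemma ext0_eq (f : R -> R) (y : R) : 0 <= y -> ext0 f y = f y.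
Proof. intros Hy. unfold ext0. rewrite Rmax_right; auto. Qed.

Lemma Zq_nonpos (q : R) (f : R -> R) (x : R) : x <= 0 -> Zq q f x = 1.
Proof. intros Hx. unfold Zq. destruct (Rle_dec x 0); [reflexivity|lra]. Qed.

Lemma Zbarq_nonpos (q : R) (f : R -> R) (x : R) : x <= 0 -> Zbarq q f x = x.
Proof. intros Hx. unfold Zbarq. destruct (Rle_dec x 0); [reflexivity|lra]. Qed.

Section ContinuousOnNonneg.

Variable f : R -> R.
Hypothesis f_cont : forall x, 0 <= x -> limit1_in f (fun y => 0 <= y) (f x) x.

Lemma continuity_pt_ext0 (y : R) : continuity_pt (ext0 f) y.
Proof.
  intros eps Heps.
  destruct (f_cont (Rmax 0 y) (Rmax_l 0 y) eps Heps) as [alp [Halp Hf]].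
  exists alp. split; [exact Halp|]. intros z [_ Hz]. apply Hf.
  split; [apply Rmax_l|]. simpl in *. unfold R_dist in *.
  eapply Rle_lt_trans; [apply Rmax0_dist|exact Hz].
Qed.

Lemma ex_RInt_ext0 (a b : R) : ex_RInt (ext0 f) a b.
Proof. apply ex_RInt_continuity_pt, continuity_pt_ext0. Qed.

Lemma integ_ext0 (a b : R) : 0 <= a -> 0 <= b -> integ f a b = RInt (ext0 f) a b.
Proof.
  intros Ha Hb. apply integ_ext_RInt; [apply ex_RInt_ext0|].
  intros x Hx. apply ext0_eq. assert (0 <= Rmin a b) by (apply Rmin_glb; auto). lra.
Qed.

Variable q : R.

Lemma Zq_RInt (y : R) : Zq q f y = 1 + q * RInt (ext0 f) 0 (Rmax 0 y).
Proof.
  destruct (Rle_dec y 0) as [Hy|Hy].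
  - rewrite Zq_nonpos, Rmax_left, RInt_point by exact Hy. change (1 = 1 + q * 0). ring.
  - unfold Zq. destruct (Rle_dec y 0); [contradiction|].
    rewrite Rmax_right, integ_ext0; lra.
Qed.

Lemma continuity_pt_Zq (y : R) : continuity_pt (Zq q f) y.
Proof.
  apply (continuity_pt_ext (fun y => 1 + q * RInt (ext0 f) 0 (Rmax 0 y))).
  { intros x. symmetry. apply Zq_RInt. }
  apply continuity_pt_plus; [apply continuity_pt_const; intros ? ?; reflexivity|].
  apply continuity_pt_mult; [apply continuity_pt_const; intros ? ?; reflexivity|].
  apply (continuity_pt_comp (fun z => Rmax 0 z) (fun s => RInt (ext0 f) 0 s)).
  - intros eps Heps. exists eps. split; [exact Heps|]. intros z [_ Hz].
    simpl in *. unfold R_dist in *. eapply Rle_lt_trans; [apply Rmax0_dist|exact Hz].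
  - apply continuity_pt_RInt, continuity_pt_ext0.
Qed.

Lemma Zq_sub (s s' : R) : 0 <= s -> 0 <= s' ->
  Zq q f s - Zq q f s' = q * RInt (ext0 f) s' s.
Proof.
  intros Hs Hs'. rewrite !Zq_RInt, !Rmax_right by assumption.
  rewrite <- (RInt_Chasles (V := R_CompleteNormedModule) (ext0 f) 0 s' s)
    by apply ex_RInt_ext0.
  change (1 + q * (RInt (ext0 f) 0 s' + RInt (ext0 f) s' s) - (1 + q * RInt (ext0 f) 0 s')
          = q * RInt (ext0 f) s' s). ring.
Qed.

Lemma Zbarq_RInt (z : R) : Zbarq q f z = RInt (Zq q f) 0 z.
Proof.
  destruct (Rle_dec z 0) as [Hz|Hz].
  - rewrite Zbarq_nonpos by exact Hz.
    rewrite (RInt_ext (V := R_CompleteNormedModule) _ (fun _ => 1)).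
    + rewrite RInt_const. change (z = (z - 0) * 1). ring.
    + intros x Hx. rewrite Rmin_right, Rmax_left in Hx by exact Hz.
      apply Zq_nonpos. lra.
  - unfold Zbarq. destruct (Rle_dec z 0); [contradiction|].
    apply integ_RInt, ex_RInt_continuity_pt, continuity_pt_Zq.
Qed.

Lemma continuity_pt_Zbarq (z : R) : continuity_pt (Zbarq q f) z.
Proof.
  apply (continuity_pt_ext (fun z => RInt (Zq q f) 0 z)).
  { intros x. symmetry. apply Zbarq_RInt. }
  apply continuity_pt_RInt, continuity_pt_Zq.
Qed.

Lemma Zq_lipschitz (T : R) : exists K, 0 <= K /\
  forall u v, 0 <= u <= v -> v <= T -> Rabs (Zq q f v - Zq q f u) <= K * (v - u).
Proof.
  destruct (continuity_bounded (ext0 f) 0 T continuity_pt_ext0) as [M [HM0 HM]].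
  exists (Rabs q * M). split; [apply Rmult_le_pos; [apply Rabs_pos|exact HM0]|].
  intros u v Huv HvT. rewrite Zq_sub, Rabs_mult, Rmult_assoc by lra.
  apply Rmult_le_compat_l; [apply Rabs_pos|]. rewrite Rmult_comm.
  apply abs_RInt_le_const; [lra|apply ex_RInt_ext0|].
  intros t Ht. apply HM. lra.
Qed.

End ContinuousOnNonneg.

Lemma RInt_exp_neg (th a b : R) : th <> 0 ->
  RInt (fun x => exp (- th * x)) a b = (exp (- th * a) - exp (- th * b)) / th.
Proof.
  intros Hth. apply is_RInt_unique.
  replace ((exp (- th * a) - exp (- th * b)) / th) with
    (minus ((fun x => - exp (- th * x) / th) b) ((fun x => - exp (- th * x) / th) a)).
  - apply (is_RInt_derive (V := R_CompleteNormedModule) (fun x => - exp (- th * x) / th)).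
    + intros x _. auto_derive; [exact I|field; exact Hth].
    + intros x _. apply continuity_pt_filterlim. reg.
  - change ((- exp (- th * b) / th) - (- exp (- th * a) / th)
      = (exp (- th * a) - exp (- th * b)) / th). field. exact Hth.
Qed.

Lemma RInt_lin_comb (g h : R -> R) (k l a b : R) : ex_RInt g a b -> ex_RInt h a b ->
  RInt (fun x => k * g x + l * h x) a b = k * RInt g a b + l * RInt h a b.
Proof.
  intros Hg Hh. apply is_RInt_unique.
  apply (is_RInt_plus (fun x => k * g x) (fun x => l * h x));
    apply (is_RInt_scal (V := R_NormedModule)); apply (RInt_correct (V := R_CompleteNormedModule));
    assumption.
Qed.

Lemma exp_le_exp (x y : R) : x <= y -> exp x <= exp y.
Proof. intros [Hxy|<-]; [apply Rlt_le, exp_increasing, Hxy|apply Rle_refl]. Qed.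

Lemma exp_neg_le_half (u : R) : 1 <= u -> exp (- u) <= / 2.
Proof.
  intros Hu. rewrite exp_Ropp. apply Rinv_le_contravar; [lra|].
  assert (H := exp_ineq1 u ltac:(lra)). lra.
Qed.

Lemma sqr_div4_lt_exp (u : R) : 0 < u -> u * u / 4 < exp u.
Proof.
  intros Hu. replace u with (u / 2 + u / 2) at 3 by field. rewrite exp_plus.
  assert (H := exp_ineq1 (u / 2) ltac:(lra)). nra.
Qed.

Lemma exp_decay_lt_inv (A k eps th0 : R) : 0 < eps -> 0 < k -> 0 <= th0 ->
  exists th, th0 < th /\ A * exp (- th * eps) < k / th.
Proof.
  intros Heps Hk Hth0.
  assert (Hc : 0 < k * (eps * eps)) by (apply Rmult_lt_0_compat; nra).
  set (th := th0 + 4 * Rabs A / (k * (eps * eps)) + 1).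
  assert (HA : 0 <= 4 * Rabs A / (k * (eps * eps))).
  { apply Rmult_le_pos; [assert (H := Rabs_pos A); lra|apply Rlt_le, Rinv_0_lt_compat, Hc]. }
  exists th. split; [unfold th; lra|].
  assert (Hth : 0 < th) by (unfold th; lra).
  assert (Hbig := sqr_div4_lt_exp (th * eps) ltac:(nra)).
  assert (HkA : 4 * Rabs A < k * (eps * eps) * th).
  { assert (H : 4 * Rabs A / (k * (eps * eps)) < th) by (unfold th; lra).
    apply (Rmult_lt_compat_l (k * (eps * eps))) in H; [|exact Hc].
    replace (k * (eps * eps) * (4 * Rabs A / (k * (eps * eps)))) with (4 * Rabs A) in H
      by (field; nra). exact H. }
  assert (HE := exp_pos (th * eps)).
  replace (- th * eps) with (- (th * eps)) by ring. rewrite exp_Ropp.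
  apply (Rmult_lt_reg_r (th * exp (th * eps))); [nra|].
  replace (A * / exp (th * eps) * (th * exp (th * eps))) with (A * th) by (field; lra).
  replace (k / th * (th * exp (th * eps))) with (k * exp (th * eps)) by (field; lra).
  assert (A <= Rabs A) by apply RRle_abs. nra.
Qed.

Section ScaleFunctionAtZero.

Variables (f psi : R -> R) (q th0 : R).
Hypothesis f_cont : forall x, 0 <= x -> limit1_in f (fun y => 0 <= y) (f x) x.
Hypothesis f_incr : forall x y, 0 <= x -> x < y -> f x < f y.
Hypothesis f_laplace :
  forall th, th0 < th -> q < psi th /\ laplace_eq f th (/ (psi th - q)).

Let G (th x : R) : R := exp (- th * x) * ext0 f x.

Lemma continuity_pt_G (th x : R) : continuity_pt (G th) x.
Proof. apply continuity_pt_mult; [reg|apply continuity_pt_ext0, f_cont]. Qed.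

Lemma ex_RInt_G (th a b : R) : ex_RInt (G th) a b.
Proof. apply ex_RInt_continuity_pt, continuity_pt_G. Qed.

Lemma integ_laplace_G (th T : R) : 0 <= T ->
  integ (fun x => exp (- th * x) * f x) 0 T = RInt (G th) 0 T.
Proof.
  intros HT. apply integ_ext_RInt; [apply ex_RInt_G|].
  intros x Hx. rewrite Rmin_left in Hx by exact HT.
  unfold G. rewrite ext0_eq by lra. reflexivity.
Qed.

Lemma laplace_partial_cvg (th e : R) : th0 < th -> 0 < e ->
  exists M, forall T, M <= T -> Rabs (RInt (G th) 0 T - / (psi th - q)) < e.
Proof.
  intros Hth He. destruct (proj2 (f_laplace th Hth) e He) as [M HM].
  exists (Rmax M 0). intros T HT.
  rewrite <- integ_laplace_G by (eapply Rle_trans; [apply Rmax_r|exact HT]).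
  apply HM. eapply Rle_trans; [apply Rmax_l|exact HT].
Qed.

Lemma laplace_partial_pos (th : R) : th0 < th ->
  exists M, forall T, M <= T -> 0 < RInt (G th) 0 T.
Proof.
  intros Hth. assert (Hpsi := proj1 (f_laplace th Hth)).
  assert (HL : 0 < / (psi th - q)) by (apply Rinv_0_lt_compat; lra).
  destruct (laplace_partial_cvg th _ Hth HL) as [M HM].
  exists M. intros T HT. specialize (HM T HT). apply Rabs_def2 in HM. lra.
Qed.

Lemma laplace_head_bound (eps m th : R) : 0 < eps -> 0 < th ->
  (forall x, 0 <= x <= eps -> f x <= - m) ->
  RInt (G th) 0 eps <= - m * ((1 - exp (- th * eps)) / th).
Proof.
  intros Heps Hth Hm.
  replace (1 - exp (- th * eps)) with (exp (- th * 0) - exp (- th * eps))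
    by (rewrite Rmult_0_r, exp_0; reflexivity).
  rewrite <- RInt_exp_neg by lra.
  assert (Hexp : ex_RInt (fun x => exp (- th * x)) 0 eps)
    by (apply ex_RInt_continuity_pt; intros; reg).
  rewrite <- (RInt_scal (V := R_CompleteNormedModule) _ _ _ _ Hexp).
  apply RInt_le; [lra|apply ex_RInt_G| |].
  - apply (ex_RInt_scal (V := R_CompleteNormedModule)), Hexp.
  - intros x Hx. change (G th x <= - m * exp (- th * x)). unfold G. rewrite ext0_eq by lra.
    assert (H := Hm x ltac:(lra)). assert (He := exp_pos (- th * x)). nra.
Qed.

(* [f + |f 0|] is nonnegative by monotonicity, so the extra decay [exp (- (th - th1) x)]
   can be bounded by its value at [eps]. *)
Lemma laplace_G_dominated (th th1 eps x : R) : 0 <= th1 <= th -> 0 <= eps <= x ->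
  G th x <= exp (- (th - th1) * eps) * G th1 x
            + exp (- (th - th1) * eps) * Rabs (f 0) * exp (- th1 * x).
Proof.
  intros Hth Hx. unfold G. rewrite !ext0_eq by lra.
  set (k := exp (- (th - th1) * eps)). set (c := Rabs (f 0)).
  assert (Hfc : 0 <= f x + c).
  { assert (f 0 <= f x) by (destruct (Req_dec x 0) as [->|]; [lra|apply Rlt_le, f_incr; lra]).
    assert (- f 0 <= c) by apply Rabs_maj2. lra. }
  replace (- th * x) with (- (th - th1) * x + - th1 * x) by ring. rewrite exp_plus.
  set (e1 := exp (- (th - th1) * x)). set (e2 := exp (- th1 * x)).
  assert (Hk : e1 <= k) by (apply exp_le_exp; nra).
  assert (H1 : 0 < e1) by apply exp_pos. assert (H2 : 0 < e2) by apply exp_pos.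
  assert (0 <= c) by apply Rabs_pos.
  assert (e1 * e2 * (f x + c) <= k * e2 * (f x + c))
    by (apply Rmult_le_compat_r; [lra|]; apply Rmult_le_compat_r; lra).
  assert (0 <= e1 * e2 * c) by (apply Rmult_le_pos; [apply Rmult_le_pos|]; lra).
  replace (k * (e2 * f x) + k * c * e2) with (k * e2 * (f x + c)) by ring.
  replace (e1 * e2 * f x) with (e1 * e2 * (f x + c) - e1 * e2 * c) by ring.
  lra.
Qed.

Lemma laplace_tail_bound (eps : R) : 0 <= eps ->
  exists th1 A M, 0 <= th1 /\
    forall th T, th1 <= th -> M <= T -> RInt (G th) eps T <= A * exp (- th * eps).
Proof.
  intros Heps. set (th1 := Rmax th0 0 + 1).
  assert (Hth1 : th0 < th1 /\ 0 < th1)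
    by (unfold th1; split; [assert (H := Rmax_l th0 0)|assert (H := Rmax_r th0 0)]; lra).
  destruct (laplace_partial_cvg th1 1 (proj1 Hth1) Rlt_0_1) as [M1 HM1].
  set (c := Rabs (f 0)).
  set (B := / (psi th1 - q) + 1 - RInt (G th1) 0 eps + c / th1).
  exists th1, (exp (th1 * eps) * B), (Rmax M1 eps). split; [lra|].
  intros th T Hth HT.
  assert (HTe : eps <= T) by (eapply Rle_trans; [apply Rmax_r|exact HT]).
  set (k := exp (- (th - th1) * eps)).
  assert (Hexp : ex_RInt (fun x => exp (- th1 * x)) eps T)
    by (apply ex_RInt_continuity_pt; intros; reg).
  assert (Hdom : RInt (G th) eps T
      <= k * RInt (G th1) eps T + (k * c) * RInt (fun x => exp (- th1 * x)) eps T).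
  { rewrite <- (RInt_lin_comb (G th1) (fun x => exp (- th1 * x)) k (k * c) eps T
      (ex_RInt_G th1 eps T) Hexp).
    apply RInt_le; [exact HTe|apply ex_RInt_G| |].
    - apply ex_RInt_continuity_pt. intros x.
      apply continuity_pt_plus; apply continuity_pt_mult; (reg || apply continuity_pt_G).
    - intros x Hx. apply laplace_G_dominated; lra. }
  assert (HG1 : RInt (G th1) eps T <= / (psi th1 - q) + 1 - RInt (G th1) 0 eps).
  { specialize (HM1 T (Rle_trans _ _ _ (Rmax_l M1 eps) HT)).
    rewrite <- (RInt_Chasles (V := R_CompleteNormedModule) (G th1) 0 eps T) in HM1
      by apply ex_RInt_G.
    change (plus ?u ?v) with (u + v) in HM1. apply Rabs_def2 in HM1. lra. }
  assert (HE : RInt (fun x => exp (- th1 * x)) eps T <= 1 / th1).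
  { rewrite RInt_exp_neg by lra.
    apply Rmult_le_compat_r; [apply Rlt_le, Rinv_0_lt_compat; lra|].
    assert (exp (- th1 * eps) <= 1) by (rewrite <- exp_0; apply exp_le_exp; nra).
    assert (HT1 := exp_pos (- th1 * T)). lra. }
  replace (exp (th1 * eps) * B * exp (- th * eps)) with (k * B)
    by (unfold k; replace (- (th - th1) * eps) with (th1 * eps + - th * eps) by ring;
        rewrite exp_plus; ring).
  assert (Hk : 0 < k) by apply exp_pos. assert (Hc : 0 <= c) by apply Rabs_pos.
  assert (k * RInt (G th1) eps T <= k * (/ (psi th1 - q) + 1 - RInt (G th1) 0 eps))
    by (apply Rmult_le_compat_l; lra).
  assert (k * c * RInt (fun x => exp (- th1 * x)) eps T <= k * c * (1 / th1))
    by (apply Rmult_le_compat_l; [apply Rmult_le_pos|]; lra).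
  replace (k * B) with (k * (/ (psi th1 - q) + 1 - RInt (G th1) 0 eps) + k * c * (1 / th1))
    by (unfold B, Rdiv; ring).
  lra.
Qed.

Lemma scale_function_below_near_0 : f 0 < 0 ->
  exists eps, 0 < eps /\ forall x, 0 <= x <= eps -> f x <= f 0 / 2.
Proof.
  intros Hf0. destruct (f_cont 0 (Rle_refl 0) (- f 0 / 2) ltac:(lra)) as [alp [Halp Hnear]].
  exists (alp / 2). split; [lra|]. intros x Hx.
  assert (H : R_dist (f x) (f 0) < - f 0 / 2).
  { apply Hnear. split; [lra|]. simpl. unfold R_dist. rewrite Rminus_0_r, Rabs_pos_eq; lra. }
  unfold R_dist in H. apply Rabs_def2 in H. lra.
Qed.

Lemma scale_function_nonneg_at_0 : 0 <= f 0.
Proof.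
  apply Rnot_lt_le. intros Hf0. set (m := - f 0 / 2).
  destruct (scale_function_below_near_0 Hf0) as [eps [Heps Hneg]].
  destruct (laplace_tail_bound eps ltac:(lra)) as [th1 [A [M [Hth1 Htail]]]].
  destruct (exp_decay_lt_inv A (m / 2) eps (Rmax (Rmax th0 th1) (1 / eps)))
    as [th [Hth Hdecay]];
    [lra|unfold m; lra|exact (Rle_trans _ _ _ Hth1 (Rle_trans _ _ _ (Rmax_r _ _) (Rmax_l _ _)))|].
  apply Rmax_Rlt in Hth as [Hth Hth_eps]. apply Rmax_Rlt in Hth as [Hth0 Hth_1].
  assert (Hthp : 0 < th) by (assert (0 < 1 / eps) by (apply Rdiv_lt_0_compat; lra); lra).
  destruct (laplace_partial_pos th Hth0) as [M' HM'].
  assert (Hpos := HM' (Rmax M M') (Rmax_r M M')).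
  rewrite <- (RInt_Chasles (V := R_CompleteNormedModule) (G th) 0 eps) in Hpos
    by apply ex_RInt_G.
  change (plus ?u ?v) with (u + v) in Hpos.
  assert (Hhead := laplace_head_bound eps m th Heps Hthp
                     ltac:(intros x Hx; specialize (Hneg x Hx); unfold m; lra)).
  assert (Hrest := Htail th (Rmax M M') ltac:(lra) (Rmax_l M M')).
  assert (Hhalf : exp (- th * eps) <= / 2).
  { apply (Rmult_lt_compat_r eps) in Hth_eps; [|exact Heps].
    replace (1 / eps * eps) with 1 in Hth_eps by (field; lra).
    replace (- th * eps) with (- (th * eps)) by ring. apply exp_neg_le_half. lra. }
  assert (Hfrac : / 2 * / th <= (1 - exp (- th * eps)) * / th)
    by (apply Rmult_le_compat_r; [apply Rlt_le, Rinv_0_lt_compat, Hthp|lra]).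
  assert (Hm : 0 < m) by (unfold m; lra).
  assert (- m * ((1 - exp (- th * eps)) / th) <= - (m / 2) / th) by (unfold Rdiv in *; nra).
  lra.
Qed.

End ScaleFunctionAtZero.

Lemma scale_function_pos (psi : R -> R) (q : R) (f : R -> R) (b : R) :
  is_scale_function psi q f -> 0 < b -> 0 < f b.
Proof.
  intros [_ [f_cont [f_incr [th0 f_laplace]]]] Hb.
  assert (H0 := scale_function_nonneg_at_0 f psi q th0 f_cont f_incr f_laplace).
  assert (f 0 < f b) by (apply f_incr; lra). lra.
Qed.

Lemma is_derive_neg_right (g : R -> R) (x l d : R) : is_derive g x l -> l < 0 -> 0 < d ->
  exists h, 0 < h < d /\ g (x + h) < g x.
Proof.
  intros Hder Hl Hd. apply is_derive_Reals in Hder.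
  destruct (Hder (- l / 2) ltac:(lra)) as [del Hdel].
  assert (Hdel0 := cond_pos del).
  set (h := Rmin (del / 2) (d / 2)).
  assert (Hh : 0 < h /\ h < del /\ h < d).
  { assert (H1 := Rmin_l (del / 2) (d / 2)). assert (H2 := Rmin_r (del / 2) (d / 2)).
    assert (0 < h) by (apply Rmin_glb_lt; lra). unfold h in *. lra. }
  exists h. split; [lra|].
  assert (Hq := Hdel h ltac:(lra) ltac:(rewrite Rabs_pos_eq; lra)).
  apply Rabs_def2 in Hq.
  assert (Hslope : (g (x + h) - g x) / h < 0) by lra.
  replace (g (x + h)) with (g x + h * ((g (x + h) - g x) / h)) by (field; lra).
  assert (h * ((g (x + h) - g x) / h) < 0) by (apply Rmult_pos_neg; lra).
  lra.
Qed.

Section GammaDiagonal.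

Variables (q delta beta rho dX : R) (WW W : R -> R).
Hypothesis WW_cont : forall x, 0 <= x -> limit1_in WW (fun y => 0 <= y) (WW x) x.
Hypothesis W_cont : forall x, 0 <= x -> limit1_in W (fun y => 0 <= y) (W x) x.

Let conv_integrand (b y : R) : R := ext0 WW (b - y) * Zq q W y.

Lemma continuity_pt_conv_integrand (b y : R) : continuity_pt (conv_integrand b) y.
Proof.
  apply continuity_pt_mult; [|apply continuity_pt_Zq, W_cont].
  apply (continuity_pt_comp (fun y => b - y) (ext0 WW)); [reg|apply continuity_pt_ext0, WW_cont].
Qed.

Lemma Gamma_diagonal_RInt (b h : R) : h <= b ->
  Gamma q delta beta rho dX WW W (b - h) b
  = delta * (1 + q * RInt (ext0 WW) 0 (b - h)) - q * rho
    - q * beta * (Rq q dX W b + delta * RInt (conv_integrand b) h b).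
Proof.
  intros Hh. unfold Gamma, rt_c.
  rewrite (Zq_RInt WW WW_cont), Rmax_right by lra.
  replace (b - (b - h)) with h by ring.
  rewrite (integ_ext_RInt _ (conv_integrand b));
    [reflexivity|apply ex_RInt_continuity_pt, continuity_pt_conv_integrand|].
  intros y Hy. rewrite Rmin_left, Rmax_right in Hy by lra.
  unfold conv_integrand. rewrite ext0_eq by lra. reflexivity.
Qed.

Lemma Gamma_not_minimal_on_diagonal (b : R) :
  0 < q -> 0 < delta -> beta < 1 -> 0 < b -> 0 < WW b ->
  ~ (forall a, 0 <= a <= b ->
       Gamma q delta beta rho dX WW W b b <= Gamma q delta beta rho dX WW W a b).
Proof.
  intros Hq Hdelta Hbeta Hb HWb Hmin.
  set (phi := fun h => delta * (1 + q * RInt (ext0 WW) 0 (b - h)) - q * rho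
    - q * beta * (Rq q dX W b + delta * RInt (conv_integrand b) h b)).
  assert (Hder : is_derive phi 0 (q * delta * WW b * (beta - 1))).
  { unfold phi. auto_derive.
    - repeat split; try (apply filter_forall; intros);
        (apply ex_RInt_continuity_pt || idtac);
        intros; (apply continuity_pt_ext0, WW_cont || apply continuity_pt_conv_integrand).
    - unfold conv_integrand.
      replace (b + - 0) with b by ring. rewrite Rminus_0_r, Zq_nonpos, ext0_eq by lra. ring. }
  assert (Hslope : q * delta * WW b * (beta - 1) < 0).
  { assert (0 < q * delta * WW b) by (repeat apply Rmult_lt_0_compat; lra).
    apply Rmult_pos_neg; lra. }
  destruct (is_derive_neg_right phi 0 _ b Hder Hslope Hb) as [h [Hh Hlt]].
  assert (Hle := Hmin (b - h) ltac:(lra)).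
  rewrite <- (Rminus_0_r b) in Hle at 1.
  rewrite !Gamma_diagonal_RInt in Hle by lra.
  rewrite Rplus_0_l in Hlt. unfold phi in Hlt. lra.
Qed.

End GammaDiagonal.

Definition right_cont0 (h : R -> R) : Prop := limit1_in h (fun x => 0 < x) (h 0) 0.

Lemma right_cont0_const (c : R) : right_cont0 (fun _ => c).
Proof. exact (limit_free (fun _ => c) _ 0 0). Qed.

Lemma right_cont0_plus (h g : R -> R) :
  right_cont0 h -> right_cont0 g -> right_cont0 (fun x => h x + g x).
Proof. apply limit_plus. Qed.

Lemma right_cont0_minus (h g : R -> R) :
  right_cont0 h -> right_cont0 g -> right_cont0 (fun x => h x - g x).
Proof. apply limit_minus. Qed.

Lemma right_cont0_scal (k : R) (h : R -> R) : right_cont0 h -> right_cont0 (fun x => k * h x).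
Proof. apply limit_mul, right_cont0_const. Qed.

Lemma right_cont0_ext (h g : R -> R) :
  (forall x, 0 <= x -> g x = h x) -> right_cont0 h -> right_cont0 g.
Proof.
  intros Hgh Hh. unfold right_cont0. rewrite Hgh by lra.
  apply (limit1_ext h); [intros x Hx; symmetry; apply Hgh; lra|exact Hh].
Qed.

Lemma right_cont0_continuity_pt (h : R -> R) : continuity_pt h 0 -> right_cont0 h.
Proof.
  intros Hh. apply (limit1_imp h (D_x no_cond 0)); [|exact Hh].
  intros x Hx. split; [exact I|lra].
Qed.

Lemma right_cont0_lipschitz (h : R -> R) (K d : R) : 0 < d ->
  (forall x, 0 < x < d -> Rabs (h x - h 0) <= K * x) -> right_cont0 h.
Proof.
  intros Hd Hlip eps Heps.
  assert (HK : 0 < Rabs K + 1) by (assert (H := Rabs_pos K); lra).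
  exists (Rmin d (eps / (Rabs K + 1))).
  split; [apply Rmin_glb_lt; [exact Hd|apply Rdiv_lt_0_compat; lra]|].
  intros x [Hx Hdx]. simpl in *. unfold R_dist in *.
  rewrite Rminus_0_r, Rabs_pos_eq in Hdx by lra.
  assert (Hxd : x < d) by (eapply Rlt_le_trans; [exact Hdx|apply Rmin_l]).
  assert (Hxe : x * (Rabs K + 1) < eps).
  { assert (H := Rlt_le_trans _ _ _ Hdx (Rmin_r d (eps / (Rabs K + 1)))).
    apply (Rmult_lt_compat_r (Rabs K + 1)) in H; [|exact HK].
    replace (eps / (Rabs K + 1) * (Rabs K + 1)) with eps in H by (field; lra). exact H. }
  assert (K <= Rabs K) by apply RRle_abs.
  eapply Rle_lt_trans; [apply Hlip; lra|]. nra.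
Qed.

Lemma RInt_param_lipschitz (g : R -> R -> R) (c e C M x : R) :
  0 <= x <= e - c -> 0 <= C -> (forall s u v, ex_RInt (g s) u v) ->
  (forall t, c <= t <= e - x -> Rabs (g x t - g 0 t) <= C * x) ->
  (forall t, e - x <= t <= e -> Rabs (g 0 t) <= M) ->
  Rabs (RInt (g x) c (e - x) - RInt (g 0) c e) <= ((e - c) * C + M) * x.
Proof.
  intros Hx HC Hex Hclose Hbound.
  rewrite <- (RInt_Chasles (V := R_CompleteNormedModule) (g 0) c (e - x) e) by apply Hex.
  change (plus ?u ?v) with (u + v).
  assert (Hdiff : Rabs (RInt (fun t => g x t - g 0 t) c (e - x)) <= (e - x - c) * (C * x)).
  { apply abs_RInt_le_const; [lra| |exact Hclose].
    apply (ex_RInt_minus (V := R_NormedModule)); apply Hex. }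
  rewrite (RInt_minus (V := R_CompleteNormedModule)) in Hdiff by apply Hex.
  change (minus ?u ?v) with (u - v) in Hdiff.
  assert (Hend := abs_RInt_le_const (g 0) (e - x) e M ltac:(lra) (Hex 0 _ _) Hbound).
  replace (e - (e - x)) with x in Hend by ring.
  assert ((e - x - c) * (C * x) <= (e - c) * C * x) by nra.
  replace (RInt (g x) c (e - x) - (RInt (g 0) c (e - x) + RInt (g 0) (e - x) e))
    with ((RInt (g x) c (e - x) - RInt (g 0) c (e - x)) - RInt (g 0) (e - x) e) by ring.
  eapply Rle_trans; [apply Rabs_triang|]. rewrite Rabs_Ropp. nra.
Qed.

Section Convolution.

Variables (q : R) (WW W : R -> R).
Hypothesis WW_neg : forall x, x < 0 -> WW x = 0.
Hypothesis WW_cont : forall x, 0 <= x -> limit1_in WW (fun y => 0 <= y) (WW x) x.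
Hypothesis W_cont : forall x, 0 <= x -> limit1_in W (fun y => 0 <= y) (W x) x.

Lemma conv_vanishes (a b x : R) : a <= x ->
  integ (fun y => WW (b - x - y) * Zq q W y) (b - a) (b - x) = 0.
Proof.
  intros Hax. apply integ_eq_0. intros y Hy.
  rewrite Rmin_right in Hy by lra. rewrite WW_neg by lra. ring.
Qed.

Lemma continuity_pt_conv_kernel (s t : R) :
  continuity_pt (fun t => ext0 WW t * Zq q W (s - t)) t.
Proof.
  apply continuity_pt_mult; [apply continuity_pt_ext0, WW_cont|].
  apply (continuity_pt_comp (fun t => s - t) (Zq q W)); [reg|apply continuity_pt_Zq, W_cont].
Qed.

Lemma conv_RInt (a b x : R) : 0 <= x <= a ->
  integ (fun y => WW (b - x - y) * Zq q W y) (b - a) (b - x)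
  = RInt (fun t => ext0 WW t * Zq q W (b - x - t)) 0 (a - x).
Proof.
  intros Hx. set (g := fun t => ext0 WW t * Zq q W (b - x - t)).
  rewrite (integ_ext_RInt _ (fun y => g (b - x - y))).
  - rewrite RInt_reflect by apply continuity_pt_conv_kernel. f_equal. ring.
  - apply ex_RInt_continuity_pt. intros y.
    apply (continuity_pt_comp (fun y => b - x - y) g); [reg|apply continuity_pt_conv_kernel].
  - intros y Hy. rewrite Rmin_left, Rmax_right in Hy by lra. unfold g.
    rewrite ext0_eq by lra. do 3 f_equal. ring.
Qed.

Lemma conv_right_cont0 (a b : R) : 0 <= a <= b ->
  right_cont0 (fun x => integ (fun y => WW (b - x - y) * Zq q W y) (b - a) (b - x)).
Proof.
  intros Hab. destruct (Req_dec a 0) as [Ha0|Ha0].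
  - apply (right_cont0_lipschitz _ 0 1); [lra|]. intros x Hx.
    rewrite !conv_vanishes by lra. rewrite Rminus_0_r, Rabs_R0. lra.
  - set (g := fun s t => ext0 WW t * Zq q W (b - s - t)).
    destruct (Zq_lipschitz W W_cont q b) as [KZ [HKZ HZ]].
    destruct (continuity_bounded (ext0 WW) 0 a (continuity_pt_ext0 WW WW_cont))
      as [MW [HMW0 HMW]].
    destruct (continuity_bounded (g 0) 0 a (continuity_pt_conv_kernel (b - 0)))
      as [M [HM0 HM]].
    apply (right_cont0_lipschitz _ (a * (MW * KZ) + M) a); [lra|]. intros x Hx.
    rewrite !conv_RInt, (Rminus_0_r a) by lra.
    replace (a * (MW * KZ) + M) with ((a - 0) * (MW * KZ) + M) by ring.
    apply (RInt_param_lipschitz g); [lra|nra| | |].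
    + intros s u v. apply ex_RInt_continuity_pt, continuity_pt_conv_kernel.
    + intros t Ht. unfold g. rewrite <- Rmult_minus_distr_l, Rabs_mult, Rabs_minus_sym.
      rewrite Rmult_assoc. apply Rmult_le_compat; try apply Rabs_pos; [apply HMW; lra|].
      replace x with (b - 0 - t - (b - x - t)) at 2 by ring. apply HZ; lra.
    + intros t Ht. apply HM. lra.
Qed.

Lemma rt_c_above (delta dX a b x : R) : a <= x ->
  rt_c q delta dX WW W (b - a) (b - x) = Rq q dX W (b - x).
Proof. intros Hax. unfold rt_c. rewrite conv_vanishes by exact Hax. ring. Qed.

Lemma optimal_value_right_cont0 (delta beta dX a b : R) : 0 <= a <= b ->
  right_cont0 (fun x => delta / q * Zq q WW (a - x)
                        - beta * rt_c q delta dX WW W (b - a) (b - x)).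
Proof.
  intros Hab. apply right_cont0_minus; apply right_cont0_scal.
  - apply right_cont0_continuity_pt.
    apply (continuity_pt_comp (fun x => a - x) (Zq q WW)); [reg|apply continuity_pt_Zq, WW_cont].
  - unfold rt_c, Rq.
    apply right_cont0_plus; [apply right_cont0_plus|apply right_cont0_scal, conv_right_cont0, Hab].
    + apply right_cont0_continuity_pt.
      apply (continuity_pt_comp (fun x => b - x) (Zbarq q W));
        [reg|apply continuity_pt_Zbarq, W_cont].
    + apply right_cont0_const.
Qed.

End Convolution.

Lemma v_formula_Gamma_zero (q delta beta rho dX : R) (WW W : R -> R) (a b x : R) :
  Gamma q delta beta rho dX WW W a b = 0 ->
  v_formula q delta beta rho dX WW W a b x
  = delta / q * Zq q WW (a - x) - beta * rt_c q delta dX WW W (b - a) (b - x).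
Proof. intros HG. unfold v_formula. rewrite HG. unfold Rdiv. ring. Qed.

Lemma v_formula_at_0 (q delta beta rho dX : R) (WW W : R -> R) (a b : R) : q <> 0 ->
  Gamma q delta beta rho dX WW W a b = 0 -> v_formula q delta beta rho dX WW W a b 0 = rho.
Proof.
  intros Hq HG. rewrite v_formula_Gamma_zero, !Rminus_0_r by exact HG.
  unfold Gamma in HG. apply (Rmult_eq_reg_l q); [|exact Hq].
  replace (q * (delta / q * Zq q WW a - beta * rt_c q delta dX WW W (b - a) b))
    with (delta * Zq q WW a - q * beta * rt_c q delta dX WW W (b - a) b) by (field; exact Hq).
  lra.
Qed.

Lemma selected_pair_lt (q delta beta rho dX : R) (psi : R -> R) (WW W : R -> R) (a b : R) :
  0 < q -> 0 < delta -> beta < 1 -> is_scale_function psi q WW ->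
  (forall x, 0 <= x -> limit1_in W (fun y => 0 <= y) (W x) x) -> 0 < b -> a <= b ->
  (forall a1, 0 <= a1 <= b ->
     Gamma q delta beta rho dX WW W a b <= Gamma q delta beta rho dX WW W a1 b) -> a < b.
Proof.
  intros Hq Hdelta Hbeta HWW W_cont Hb [Hlt|<-] Hmin; [exact Hlt|exfalso].
  apply (Gamma_not_minimal_on_diagonal q delta beta rho dX WW W (proj1 (proj2 HWW)) W_cont a);
    [exact Hq|exact Hdelta|exact Hbeta|exact Hb|exact (scale_function_pos _ _ _ _ HWW Hb)|].
  exact Hmin.
Qed.

Theorem mainTheorem5
  (q delta beta rho : R) (psiY : R -> R) (dY : R) (WW W : R -> R)
  (v : R -> R -> R -> R) (astar bstar : R)
  (Hq : 0 < q) (Hdelta : 0 < delta) (Hbeta : 0 < beta < 1)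
  (HpsiY0 : psiY 0 = 0)
  (HdY : limit1_in (fun h => (psiY h - psiY 0) / h) (fun h => 0 < h) dY 0)
  (HWW : is_scale_function psiY q WW)
  (HW : is_scale_function (fun th => psiY th + delta * th) q W)
  (Hv : forall a b x, 0 <= a < b -> 0 <= x ->
        v a b x = v_formula q delta beta rho (dY + delta) WW W a b x)
  (Hv00 : forall x, 0 <= x -> v 0 0 x = beta * x + rho)
  (Hsel : selected_pair q delta beta rho (dY + delta) WW W astar bstar) :
  (0 < bstar ->
     (forall x, 0 <= x ->
        v astar bstar x = (delta / q) * Zq q WW (astar - x)
                          - beta * rt_c q delta (dY + delta) WW W (bstar - astar) (bstar - x)) /\
     (forall x, astar <= x ->
        v astar bstar x = delta / q - beta * Rq q (dY + delta) W (bstar - x)) /\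
     (forall x, bstar <= x ->
        v astar bstar x = beta * (x - bstar - (dY + delta) / q) + delta / q)) /\
  (astar = 0 /\ bstar = 0 -> forall x, 0 <= x -> v astar bstar x = beta * x + rho) /\
  limit1_in (v astar bstar) (fun x => 0 < x) rho 0 /\
  v astar bstar 0 = rho.
Proof.
  pose proof HWW as [WW_neg [WW_cont _]].
  destruct HW as [_ [W_cont _]].
  destruct Hsel as [[_ [-> ->]] | [_ [Hb [[Ha0 Hab] [HG0 [Hmin _]]]]]].
  - assert (Hv0 : v 0 0 0 = rho) by (rewrite Hv00 by lra; ring).
    assert (Hlim : right_cont0 (v 0 0)).
    { apply (right_cont0_ext (fun x => beta * x + rho)); [exact Hv00|].
      apply right_cont0_continuity_pt. reg. }
    unfold right_cont0 in Hlim. rewrite Hv0 in Hlim.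
    split; [intros Hb; lra|]. split; [intros _; exact Hv00|]. split; [exact Hlim|exact Hv0].
  - assert (Hlt := selected_pair_lt q delta beta rho (dY + delta) psiY WW W astar bstar
                     Hq Hdelta (proj2 Hbeta) HWW W_cont Hb Hab Hmin).
    set (F := fun x => delta / q * Zq q WW (astar - x)
                       - beta * rt_c q delta (dY + delta) WW W (bstar - astar) (bstar - x)).
    assert (HvF : forall x, 0 <= x -> v astar bstar x = F x)
      by (intros x Hx; rewrite Hv by (try split; lra); apply v_formula_Gamma_zero, HG0).
    assert (Hv0 : v astar bstar 0 = rho)
      by (rewrite Hv by (try split; lra); apply v_formula_at_0; [lra|exact HG0]).
    assert (Hge : forall x, astar <= x ->
              v astar bstar x = delta / q - beta * Rq q (dY + delta) W (bstar - x)).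
    { intros x Hx. rewrite HvF by lra. unfold F.
      rewrite Zq_nonpos, (rt_c_above q WW W WW_neg) by lra. ring. }
    assert (Hlim : right_cont0 (v astar bstar)).
    { apply (right_cont0_ext F); [exact HvF|].
      apply optimal_value_right_cont0; [exact WW_neg|exact WW_cont|exact W_cont|lra]. }
    unfold right_cont0 in Hlim. rewrite Hv0 in Hlim.
    split; [intros _; split; [exact HvF|split; [exact Hge|]]|].
    { intros x Hx. rewrite Hge by lra. unfold Rq. rewrite Zbarq_nonpos by lra. field. lra. }
    split; [intros [_ Hb0]; lra|]. split; [exact Hlim|exact Hv0].
Qed.
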